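(* Let $E$ be a separable metric space with distance $d$, $m$ a probability measure on $E$ with full support, and for each $N\ge1$ let $E_N\subset E$, let $m_N$ be a probability measure on $E_N$ with $m_N\to m$ weakly, and let $\pi_N:E\to E_N$ be a map with $d(x,\pi_N(x))=\inf_{y\in E_N}d(x,y)$ for all $x\in E$. Let $F_N:E_N\to\mathbb R$, $N\ge1$, satisfy $\sup_N\|F_N\|_\infty<\infty$ and $\omega(\delta):=\sup_{N\ge1}\sup\{|F_N(x)-F_N(y)|:x,y\in E_N,\,d(x,y)\le\delta\}\to0$ as $\delta\downarrow0$. Then there exist a bounded uniformly continuous $F:E\to\mathbb R$ and a subsequence $(N_j)_{j\ge1}$ such that: (1) for every compact $J\subset E$, $\sup_{x\in J\cap E_{N_j}}|F(x)-F_{N_j}(x)|\to0$ as $j\to\infty$; (2) $F_{N_j}(\pi_{N_j}x)\to F(x)$ for all $x\in E$. *)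

From HB Require Import structures.
From mathcomp Require Import all_boot all_order all_algebra.
From mathcomp Require Import all_classical all_reals all_analysis.
Import Order.TTheory GRing.Theory Num.Theory numFieldNormedType.Exports.
Local Open Scope classical_set_scope.
Local Open Scope ring_scope.

Section Metric.
Context {R : realType} {T : Type} (d : T -> T -> R).

Definition is_metric : Prop :=
  [/\ (forall x y, 0 <= d x y),
      (forall x y, d x y = 0 <-> x = y),
      (forall x y, d x y = d y x) &
      (forall x y z, d x z <= d x y + d y z)].

Definition mball (x : T) (e : R) : set T := [set y | d x y < e].

Definition mopen (A : set T) : Prop :=
  forall x, A x -> exists2 e, 0 < e & mball x e `<=` A.

Definition mcompact (J : set T) : Prop :=
  forall C : set (set T), (forall A, C A -> mopen A) ->
    J `<=` \bigcup_(A in C) A ->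
    exists2 D : set (set T), finite_set D & D `<=` C /\ J `<=` \bigcup_(A in D) A.

Definition mseparable : Prop :=
  exists D : set T, countable D /\
    forall x e, 0 < e -> exists2 y, D y & d x y < e.

Definition mcontinuous (f : T -> R) : Prop :=
  forall x e, 0 < e -> exists2 del, 0 < del &
    forall y, d x y < del -> `|f x - f y| < e.

Definition muniform_continuous (f : T -> R) : Prop :=
  forall e, 0 < e -> exists2 del, 0 < del &
    forall x y, d x y < del -> `|f x - f y| < e.

Definition fbounded (f : T -> R) : Prop := exists M : R, forall x, `|f x| <= M.

Definition omega (E : nat -> set T) (F : nat -> T -> R) (del : R) : R :=
  sup [set r | exists N x y,
         [/\ E N x, E N y, d x y <= del & r = `|F N x - F N y|]].

End Metric.

From HB Require Import structures.
From mathcomp Require Import all_boot all_order all_algebra.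
From mathcomp Require Import all_classical all_reals all_analysis.
From mathcomp Require Import unstable ring lra measurable_realfun.
Import Order.TTheory GRing.Theory Num.Theory numFieldNormedType.Exports.
Local Open Scope classical_set_scope.
Local Open Scope ring_scope.

(* Put G_N := F_N \o pi_N. Testing the weak convergence m_N -> m against a tent function
   supported in a ball shows, by full support of m, that every ball eventually meets E_N,
   i.e. d(x, pi_N x) -> 0 for every x. Since pi_N is then nearly 2-Lipschitz, the uniform
   modulus omega makes (G_N) equicontinuous up to a threshold in N depending only on the
   centre. Along a countable dense sequence a diagonal extraction makes G_N converge;
   equicontinuity propagates the convergence to every point, gives a uniformly continuous
   limit, and makes the convergence uniform on compacts (finite subcover). Finally
   G_N = F_N on E_N. *)

Section metric.
Context {R : realType} {T : Type} {d : T -> T -> R}.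
Hypothesis hd : is_metric d.

Lemma is_metric_ge0 x y : 0 <= d x y. Proof. by case: hd. Qed.
Lemma is_metricxx x : d x x = 0. Proof. by case: hd => _ dP _ _; apply/dP. Qed.
Lemma is_metricC x y : d x y = d y x. Proof. by case: hd. Qed.
Lemma is_metric_triangle x y z : d x z <= d x y + d y z. Proof. by case: hd. Qed.

Lemma mball_center x e : 0 < e -> mball d x e x.
Proof. by rewrite /mball /= is_metricxx. Qed.

Lemma mopen_mball x e : mopen d (mball d x e).
Proof.
move=> y dxy; exists (e - d x y) => [|z dyz]; first by rewrite subr_gt0.
have := is_metric_triangle x y z; rewrite /mball /= in dxy dyz *; lra.
Qed.

Lemma mseparable_dense_seq (t : T) : mseparable d ->
  exists u : nat -> T, forall x e, 0 < e -> exists n, d x (u n) < e.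
Proof.
move=> [D [cD D_dense]]; case/pfcard_geP: cD => [D0|/surjfunPex [u Du]].
  have [y + _] := D_dense t 1 ltr01; by rewrite D0.
exists u => x e e0; have [y + dxy] := D_dense x e e0.
by rewrite Du => -[n _ un]; exists n; rewrite un.
Qed.

Section nearest_point.
Context {A : set T} {p : T -> T}.
Hypotheses (p_in : forall x, A (p x)) (p_inf : forall x, d x (p x) = inf [set d x y | y in A]).

Lemma nearest_le x y : A y -> d x (p x) <= d x y.
Proof.
move=> Ay; rewrite p_inf; apply: ge_inf; last by exists y.
by exists 0 => _ [z _ <-]; exact: is_metric_ge0.
Qed.

Lemma nearest_id x : A x -> p x = x.
Proof.
move=> Ax; apply/esym; case: hd => _ dP _ _; apply/dP/eqP.
by rewrite eq_le is_metric_ge0 andbT -(is_metricxx x) nearest_le.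
Qed.

Lemma nearest_dist x y : d (p x) (p y) <= 2 * d x y + 2 * d y (p y).
Proof.
have := is_metric_triangle (p x) x (p y); have := is_metric_triangle x y (p y).
have := nearest_le x _ (p_in y); rewrite (is_metricC (p x) x); lra.
Qed.

End nearest_point.

Lemma mcompact_near_uniform (I : Type) (F : set_system I) (P : I -> T -> Prop)
    (J : set T) : Filter F -> mcompact d J ->
  (forall z, J z -> exists2 r, 0 < r &
     \forall i \near F, forall x, mball d z r x -> P i x) ->
  \forall i \near F, forall x, J x -> P i x.
Proof.
move=> FF cJ Ploc.
pose C := [set B | mopen d B /\ \forall i \near F, forall x, B x -> P i x].
have [D /finite_fsetP [Ds ->] [DC JD]] : exists2 D, finite_set D &
    D `<=` C /\ J `<=` \bigcup_(B in D) B.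
  apply: (cJ C) => [B []//|z Jz]; have [r r0 Pr] := Ploc z Jz.
  by exists (mball d z r); [split; [exact: mopen_mball|] | exact: mball_center].
have PD := @filter_bigI I _ Ds (fun B => [set i | forall x, B x -> P i x]) F FF
  (fun B DB => (DC B DB).2).
by apply: filterS PD => i PDi x /JD [B DB]; apply: PDi.
Qed.

End metric.

Lemma near_subseq (f : nat -> nat) (P : nat -> Prop) :
  {homo f : i j / (i < j)%N} ->
  (\forall n \near \oo, P n) -> \forall j \near \oo, P (f j).
Proof.
move=> /leq_mono/mono_leq_infl f_ge [N _ PN]; exists N => // j /= Nj.
exact/PN/(leq_trans Nj).
Qed.

Section diagonal_subseq.
Context {R : realType} {u : nat -> nat -> R} {M : R}.
Hypothesis u_bounded : forall n k, `|u n k| <= M.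

Lemma row_cvg_subseq (f : nat -> nat) n :
  exists2 g : nat -> nat, {homo g : i j / (i < j)%N} & cvgn (fun k => u n (f (g k))).
Proof.
have row_bounded : bounded_fun (fun k => u n (f k)).
  exists M; split=> [|y My k _]; first exact: num_real.
  exact/(le_trans (u_bounded _ _))/ltW.
have [g g_incr g_cvg] := bolzano_weierstrass row_bounded.
by exists g => // i j; rewrite -(leqW_mono g_incr).
Qed.

Let row_subseq f n := s2val (cid2 (row_cvg_subseq f n)).
Let row_subseq_incr f n : {homo row_subseq f n : i j / (i < j)%N}.
Proof. exact: (s2valP (cid2 (row_cvg_subseq f n))). Qed.
Let row_subseq_cvg f n : cvgn (fun k => u n (f (row_subseq f n k))).
Proof. exact: (s2valP' (cid2 (row_cvg_subseq f n))). Qed.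
Let row_subseq_ge f n m : (m <= row_subseq f n m)%N.
Proof. exact/mono_leq_infl/leq_mono/row_subseq_incr. Qed.

Fixpoint nested (k : nat) : nat -> nat :=
  if k is k'.+1 then nested k' \o row_subseq (nested k') k else row_subseq id 0.

Lemma nested_incr k : {homo nested k : i j / (i < j)%N}.
Proof.
elim: k => [|k IHk] i j ij /=; first exact: row_subseq_incr.
exact/IHk/row_subseq_incr.
Qed.

Lemma nested_cvg k : cvgn (fun j => u k (nested k j)).
Proof. by case: k => [|k]; [exact: (row_subseq_cvg id) | exact: (row_subseq_cvg (nested k))]. Qed.

Lemma nested_tail k j m : (k <= j)%N ->
  exists2 m', (m <= m')%N & nested j m = nested k m'.
Proof.
elim: j m => [|j IHj] m; first by rewrite leqn0 => /eqP ->; exists m.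
rewrite leq_eqVlt ltnS => /orP[/eqP <-|kj]; first by exists m.
have [m' mm' nested_m'] := IHj (row_subseq (nested j) j.+1 m) kj.
by exists m'; first exact: leq_trans (row_subseq_ge _ _ m) mm'.
Qed.

Lemma nested_diag_incr : {homo (fun j => nested j j) : i j / (i < j)%N}.
Proof.
apply: homo_ltn => [i j k|j]; first exact: ltn_trans.
exact/nested_incr/(leq_trans _ (row_subseq_ge _ _ j.+1)).
Qed.

Lemma nested_diag_cvg n : cvgn (fun j => u n (nested j j)).
Proof.
apply/cvg_ex; exists (limn (fun j => u n (nested n j))).
apply/cvgrPdist_lt => e e0.
have /cvgrPdist_lt/(_ e e0)[K _ HK] := nested_cvg n.
exists (maxn n K) => // j /=; rewrite geq_max => /andP[nj Kj].
have [m' jm' ->] := @nested_tail n j j nj.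
exact/HK/(leq_trans Kj).
Qed.

Lemma diagonal_subseq : exists2 psi : nat -> nat, {homo psi : i j / (i < j)%N} &
  forall n, cvgn (fun j => u n (psi j)).
Proof. exists (fun j => nested j j); [exact: nested_diag_incr | exact: nested_diag_cvg]. Qed.

End diagonal_subseq.

(* Weaker than equicontinuity of each tail: the threshold in N may depend on the centre y,
   as it does for F_N \o pi_N through d(y, pi_N y). *)
Definition eventually_equicontinuous {R : realType} {T : Type} (d : T -> T -> R)
    (g : nat -> T -> R) :=
  forall e, 0 < e -> exists2 del, 0 < del &
    forall y, \forall N \near \oo, forall x, d y x < del -> `|g N x - g N y| <= e.

Section arzela_ascoli.
Context {R : realType} {T : Type} {d : T -> T -> R}.
Hypothesis hd : is_metric d.

Lemma eventually_equicontinuous_subseq {g psi} : {homo psi : i j / (i < j)%N} ->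
  eventually_equicontinuous d g -> eventually_equicontinuous d (fun j => g (psi j)).
Proof.
move=> psi_incr g_equi e e0; have [del del0 g_del] := g_equi e e0.
exists del => // y.
exact: (@near_subseq psi (fun N => forall x, d y x < del -> `|g N x - g N y| <= e)).
Qed.

Section pointwise_limit.
Context {h : nat -> T -> R} {u : nat -> T}.
Hypotheses (h_equi : eventually_equicontinuous d h)
  (u_dense : forall x e, 0 < e -> exists n, d x (u n) < e)
  (h_cvg_dense : forall n, cvgn (fun j => h j (u n))).

Lemma equicontinuous_cvg x : cvgn (fun j => h j x).
Proof.
apply/cauchy_cvgP/cauchy_exP => e e0.
have e20 : 0 < e / 2 by rewrite divr_gt0.
have [del del0 h_del] := h_equi _ e20.
have [n dxn] := u_dense x del del0.
exists (limn (fun j => h j (u n))).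
have /cvgrPdist_lt/(_ _ e20) h_un := h_cvg_dense n.
apply: filterS2 h_un (h_del (u n)) => j h_un_j /(_ x).
rewrite (is_metricC hd) => /(_ dxn); rewrite /ball /= distrC => h_x_j.
by apply: le_lt_trans (ler_distD (h j (u n)) _ _) _; lra.
Qed.

Let F0 x := limn (fun j => h j x).

Lemma equicontinuous_cvg_to x : h ^~ x @ \oo --> F0 x.
Proof. exact: equicontinuous_cvg. Qed.

Lemma equicontinuous_lim_bounded M : (forall N x, `|h N x| <= M) -> fbounded F0.
Proof.
move=> h_bounded; exists M => x.
by apply: cvgr_to_le (cvg_norm (equicontinuous_cvg_to x)) _; apply: nearW.
Qed.

Lemma equicontinuous_lim_uniform_continuous : muniform_continuous d F0.
Proof.
move=> e e0; have e20 : 0 < e / 2 by rewrite divr_gt0.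
have [del del0 h_del] := h_equi _ e20; exists del => // x y dxy.
have F0_le : `|F0 y - F0 x| <= e / 2.
  apply: cvgr_to_le (cvg_norm (cvgB (equicontinuous_cvg_to y) (equicontinuous_cvg_to x))) _.
  by apply: filterS (h_del x) => j /(_ y dxy).
rewrite distrC; lra.
Qed.

Lemma equicontinuous_cvg_uniform J : mcompact d J -> forall e, 0 < e ->
  \forall j \near \oo, forall x, J x -> `|F0 x - h j x| <= e.
Proof.
move=> cJ e e0.
apply: (@mcompact_near_uniform _ _ _ hd _ _ (fun j x => `|F0 x - h j x| <= e) _ _ cJ) => z Jz.
have e30 : 0 < e / 3 by rewrite divr_gt0.
have [del del0 h_del] := h_equi (e / 3) e30.
have [del' del'0 F0_del'] := equicontinuous_lim_uniform_continuous _ e30.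
exists (Num.min del del'); first by rewrite lt_min del0 del'0.
have /cvgrPdist_lt/(_ (e / 3) e30) h_z := equicontinuous_cvg_to z.
apply: filterS2 h_z (h_del z) => j h_z_j h_del_j x.
rewrite /mball /= lt_min => /andP[dzx dzx'].
have := F0_del' z x dzx'; have := h_del_j x dzx.
have := ler_distD (h j z) (F0 x) (h j x); have := ler_distD (F0 z) (F0 x) (h j z).
rewrite [`|h j x - _|]distrC [`|F0 x - F0 z|]distrC; lra.
Qed.

End pointwise_limit.

Theorem arzela_ascoli_subseq {g : nat -> T -> R} {M : R} {u : nat -> T} :
  (forall x e, 0 < e -> exists n, d x (u n) < e) ->
  (forall N x, `|g N x| <= M) -> eventually_equicontinuous d g ->
  exists (F0 : T -> R) (psi : nat -> nat),
    [/\ {homo psi : i j / (i < j)%N}, fbounded F0, muniform_continuous d F0,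
        (forall x, g (psi j) x @[j --> \oo] --> F0 x) &
        forall J, mcompact d J -> forall e, 0 < e ->
          \forall j \near \oo, forall x, J x -> `|F0 x - g (psi j) x| <= e].
Proof.
move=> u_dense g_bounded g_equi.
have [psi psi_incr psi_cvg] := diagonal_subseq (fun n k => g_bounded k (u n)).
have gpsi_equi := eventually_equicontinuous_subseq psi_incr g_equi.
exists (fun x => limn (fun j => g (psi j) x)), psi; split => //.
- exact: (equicontinuous_lim_bounded gpsi_equi u_dense psi_cvg _
    (fun j => g_bounded (psi j))).
- exact: (equicontinuous_lim_uniform_continuous gpsi_equi u_dense psi_cvg).
- exact: (equicontinuous_cvg_to gpsi_equi u_dense psi_cvg).
- exact: (equicontinuous_cvg_uniform gpsi_equi u_dense psi_cvg).
Qed.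

End arzela_ascoli.

Lemma ler_dist_max0 {R : realDomainType} (a b : R) :
  `|Num.max 0 a - Num.max 0 b| <= `|a - b|.
Proof.
have := ler_norm (a - b); have := ler_norm (b - a); rewrite distrC.
by case: (leP 0 a) => ha; case: (leP 0 b) => hb; rewrite ?subr0 ?sub0r ?normrN ?subrr ?normr0;
  rewrite ?ler_norml; try (apply/andP; split); lra.
Qed.

Definition tent {R : realType} {T : Type} (d : T -> T -> R) (x : T) (e : R) (z : T) : R :=
  Num.max 0 (1 - d x z / e).

Section tent.
Context {R : realType} {T : Type} {d : T -> T -> R}.
Hypothesis hd : is_metric d.
Variables (x : T) (e : R).
Hypothesis e0 : 0 < e.

Lemma tent_ge0 z : 0 <= tent d x e z. Proof. by rewrite le_max lexx. Qed.

Lemma tent_le1 z : tent d x e z <= 1.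
Proof.
by rewrite ge_max ler01 /= lerBlDr lerDl divr_ge0 ?(is_metric_ge0 hd) ?(ltW e0).
Qed.

Lemma tent_fbounded : fbounded (tent d x e).
Proof. by exists 1 => z; rewrite ger0_norm ?tent_ge0 ?tent_le1. Qed.

Lemma tent_out z : ~ mball d x e z -> tent d x e z = 0.
Proof.
rewrite /mball /= => /negP; rewrite -leNgt => exz; apply/max_l.
by rewrite subr_le0 ler_pdivlMr // mul1r.
Qed.

Lemma tent_ge_half z : mball d x (e / 2) z -> 1 / 2 <= tent d x e z.
Proof.
rewrite /mball /= => dxz; rewrite le_max; apply/orP; right.
have : d x z / e <= 1 / 2 by rewrite ler_pdivrMr //; lra.
lra.
Qed.

Lemma tent_mcontinuous : mcontinuous d (tent d x e).
Proof.
move=> z eps eps0; exists (eps * e) => [|y dzy]; first exact: mulr_gt0.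
rewrite /tent; apply: le_lt_trans (ler_dist_max0 _ _) _.
have -> : (1 - d x z / e) - (1 - d x y / e) = (d x y - d x z) / e by ring.
rewrite normrM [`|e^-1|]gtr0_norm ?invr_gt0 // ltr_pdivrMr //; apply: le_lt_trans dzy.
have := is_metric_triangle hd x z y; have := is_metric_triangle hd x y z.
rewrite (is_metricC hd y z) ler_norml; move=> *; apply/andP; split; lra.
Qed.
End tent.

Section integral_bounds.
Local Open Scope ereal_scope.
Context {dsp : measure_display} {T : measurableType dsp} {R : realType}.
Variables (mu : {measure set T -> \bar R}) (A : set T) (f : T -> R).
Hypotheses (mA : measurable A) (mf : measurable_fun setT f) (f0 : forall z, (0 <= f z)%R).

Lemma measure_mul_le_integral (c : R) : (0 <= c)%R -> (forall z, A z -> (c <= f z)%R) ->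
  c%:E * mu A <= \int[mu]_z (f z)%:E.
Proof.
move=> c0 cf; rewrite -(setIT A) -integral_indic // -ge0_integralZl_EFin //; last first.
  by apply/measurable_EFinP; exact: measurable_indic.
apply: ge0_le_integral => //.
- by move=> z _; rewrite lee_fin mulr_ge0.
- by apply/measurable_EFinP; apply: measurable_funM => //; exact: measurable_indic.
- exact/measurable_EFinP.
move=> z _; rewrite lee_fin indicE.
by case: (boolP (z \in A)) => [/set_mem/cf|_]; rewrite ?mulr1 ?mulr0.
Qed.

Lemma integral_le_measure : (forall z, f z <= 1)%R -> (forall z, ~ A z -> f z = 0%R) ->
  \int[mu]_z (f z)%:E <= mu A.
Proof.
move=> f1 fA; rewrite -(setIT A) -integral_indic //.
apply: ge0_le_integral => //.
- by move=> z _; rewrite lee_fin.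
- exact/measurable_EFinP.
- by apply/measurable_EFinP; exact: measurable_indic.
move=> z _; rewrite lee_fin indicE.
by case: (boolP (z \in A)) => [_|]; rewrite ?mulr1 ?f1 // notin_setE => /fA ->.
Qed.

End integral_bounds.

Section borel_metric.
Context {R : realType} {dsp : measure_display} {T : measurableType dsp}
  {d : T -> T -> R}.
Hypothesis hBorel : @measurable dsp T = <<s mopen d >>.

Lemma mopen_measurable {A} : mopen d A -> measurable A.
Proof. by move=> oA; rewrite hBorel; exact: sub_sigma_algebra. Qed.

Lemma mcontinuous_measurable {f} : mcontinuous d f -> measurable_fun setT f.
Proof.
move=> fc; apply: (measurability _ (measurable_realfun.RGenOInfty.measurableE R)).
move=> _ [_ [a ->] <-]; apply: mopen_measurable => z [_ /=].
rewrite in_itv /= andbT -subr_gt0 => az.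
have [del del0 fdel] := fc z _ az.
exists del => // y /fdel; rewrite ltr_norml => /andP[_ fy].
by rewrite /= in_itv /= andbT; lra.
Qed.

End borel_metric.

Lemma probability_inhabited {dsp : measure_display} {T : measurableType dsp}
  {R : realType} (P : probability T R) : [set: T] !=set0.
Proof.
apply/set0P/eqP => T0; have := probability_setT P.
by rewrite T0 measure0 => /eqP; rewrite eq_sym onee_eq0.
Qed.

Section support_density.
Context {R : realType} {dsp : measure_display} {T : measurableType dsp}
  {d : T -> T -> R}.
Hypotheses (hd : is_metric d) (hBorel : @measurable dsp T = <<s mopen d >>).
Context {m : probability T R} {E : nat -> set T} {mN : nat -> probability T R}.
Hypotheses
  (hsupp : forall A : set T, mopen d A -> A !=set0 -> (0 < m A)%E)
  (hmN_on : forall N (A : set T), measurable A -> A `&` E N = set0 -> mN N A = 0%E)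
  (hweak : forall f : T -> R, mcontinuous d f -> fbounded f ->
     (\int[mN N]_x (f x)%:E)%E @[N --> \oo] --> (\int[m]_x (f x)%:E)%E).

Lemma mball_eventually_meets x e : 0 < e ->
  \forall N \near \oo, mball d x e `&` E N !=set0.
Proof.
move=> e0; have e20 : 0 < e / 2 by rewrite divr_gt0.
have tent_meas := mcontinuous_measurable hBorel (tent_mcontinuous hd x e e0).
have ball_meas := mopen_measurable hBorel (mopen_mball hd x e).
have m_tent_gt0 : (0 < \int[m]_z (tent d x e z)%:E)%E.
  apply: (@lt_le_trans _ _ ((1 / 2)%R%:E * m (mball d x (e / 2)))%E).
    rewrite mule_gt0 ?lte_fin ?divr_gt0 //; apply: hsupp; first exact: mopen_mball.
    by exists x; exact: mball_center.
  apply: measure_mul_le_integral => //; first exact: mopen_measurable (mopen_mball hd _ _).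
  - exact: tent_ge0.
  - exact: tent_ge_half.
have /(_ _ (open_ereal_gt' m_tent_gt0)) :=
  hweak _ (tent_mcontinuous hd x e e0) (tent_fbounded hd x e e0).
case=> K _ K_gt0; exists K => // N /K_gt0 /= mN_tent_gt0; apply/set0P/eqP => ball_E.
suff : (\int[mN N]_z (tent d x e z)%:E <= 0)%E by rewrite leNgt mN_tent_gt0.
rewrite -(hmN_on _ _ ball_meas ball_E); apply: integral_le_measure => //.
- exact: tent_ge0.
- exact: tent_le1.
- exact: tent_out.
Qed.

Context {p : nat -> T -> T}.
Hypothesis p_inf : forall N x, d x (p N x) = inf [set d x y | y in E N].

Lemma nearest_dist_near0 x e : 0 < e -> \forall N \near \oo, d x (p N x) < e.
Proof.
move=> e0; apply: filterS (mball_eventually_meets x e e0) => N [y [dxy Ey]].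
exact: le_lt_trans (nearest_le hd (p_inf N) _ _ Ey) dxy.
Qed.

End support_density.

Lemma omega_equicontinuous {R : realType} {T : Type} {d : T -> T -> R}
    {E : nat -> set T} {F : nat -> T -> R} {M : R} :
  (forall N x, E N x -> `|F N x| <= M) ->
  omega d E F del @[del --> 0^'+] --> 0 ->
  forall e, 0 < e -> exists2 del, 0 < del &
    forall N x y, E N x -> E N y -> d x y <= del -> `|F N x - F N y| <= e.
Proof.
move=> F_bounded omega0 e e0.
have /cvgrPdist_lt/(_ e e0) omega_lt := omega0.
have [del [del0 omega_del]] := filter_ex (filterI (nbhs_right_gt 0) omega_lt).
exists del => // N x y Ex Ey dxy.
have omega_ub : has_ubound [set r | exists N x y,
    [/\ E N x, E N y, d x y <= del & r = `|F N x - F N y|]].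
  exists (M + M) => _ [N' [x' [y' [Ex' Ey' _ ->]]]].
  by apply: le_trans (ler_normB _ _) _; apply: lerD; apply: F_bounded.
apply: le_trans (ub_le_sup omega_ub _) _; first by exists N, x, y.
by move: omega_del; rewrite sub0r normrN => /(le_lt_trans (ler_norm _))/ltW.
Qed.

Lemma nearest_comp_equicontinuous {R : realType} {T : Type} {d : T -> T -> R}
    {E : nat -> set T} {F : nat -> T -> R} {p : nat -> T -> T} :
  is_metric d -> (forall N x, E N (p N x)) ->
  (forall N x, d x (p N x) = inf [set d x y | y in E N]) ->
  (forall x e, 0 < e -> \forall N \near \oo, d x (p N x) < e) ->
  (forall e, 0 < e -> exists2 del, 0 < del &
    forall N x y, E N x -> E N y -> d x y <= del -> `|F N x - F N y| <= e) ->
  eventually_equicontinuous d (fun N x => F N (p N x)).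
Proof.
move=> hd p_in p_inf p_near F_equi e e0.
have [del del0 F_del] := F_equi e e0.
have del40 : 0 < del / 4 by rewrite divr_gt0.
exists (del / 4) => // y; apply: filterS (p_near y _ del40) => N dy x dyx.
apply: F_del => //; apply: le_trans (nearest_dist hd (p_in N) (p_inf N) x y) _.
rewrite (is_metricC hd x); lra.
Qed.

Lemma sup_norm_cvg0 {R : realType} {T : Type} (A : nat -> set T) (f : nat -> T -> R) :
  (forall e, 0 < e -> \forall j \near \oo, forall x, A j x -> `|f j x| <= e) ->
  sup [set `|f j x| | x in A j] @[j --> \oo] --> 0.
Proof.
move=> f_unif; apply/cvgrPdist_lt => e e0.
have e20 : 0 < e / 2 by rewrite divr_gt0.
apply: filterS (f_unif _ e20) => j f_le; rewrite sub0r normrN.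
set S := [set _ | x in _].
have S_bounds s : S s -> 0 <= s <= e / 2.
  by move=> [x Ax <-]; rewrite normr_ge0 f_le.
have [->|/set0P[s Ss]] := eqVneq S set0; first by rewrite sup0 normr0.
have : s <= sup S by apply: ub_le_sup Ss; exists (e / 2) => t /S_bounds /andP[].
have : sup S <= e / 2 by apply: ge_sup; [exists s | move=> t /S_bounds /andP[]].
have /andP[s0 _] := S_bounds s Ss.
by move=> supS_le s_le; rewrite ger0_norm; lra.
Qed.

Theorem theorem2p7 (R : realType) (dsp : measure_display) (T : measurableType dsp)
  (d : T -> T -> R) (hd : is_metric d)
  (hBorel : @measurable dsp T = <<s mopen d >>)
  (hsep : mseparable d)
  (m : probability T R)
  (hsupp : forall A : set T, mopen d A -> A !=set0 -> (0 < m A)%E)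
  (E : nat -> set T) (mN : nat -> probability T R)
  (hmN_on : forall N (A : set T), measurable A -> A `&` E N = set0 -> mN N A = 0%E)
  (hweak : forall f : T -> R, mcontinuous d f -> fbounded f ->
     (\int[mN N]_x (f x)%:E)%E @[N --> \oo] --> (\int[m]_x (f x)%:E)%E)
  (pi : nat -> T -> T)
  (hpiE : forall N x, E N (pi N x))
  (hpi : forall N x, d x (pi N x) = inf [set d x y | y in E N])
  (F : nat -> T -> R)
  (hFb : exists M : R, forall N x, E N x -> `|F N x| <= M)
  (homega : omega d E F del @[del --> 0^'+] --> 0) :
  exists (F0 : T -> R) (Nj : nat -> nat),
    [/\ fbounded F0, muniform_continuous d F0,
        {homo Nj : i j / (i < j)%N},
        (forall J : set T, mcompact d J ->
           sup [set `|F0 x - F (Nj j) x| | x in J `&` E (Nj j)] @[j --> \oo] --> 0) &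
        (forall x : T, F (Nj j) (pi (Nj j) x) @[j --> \oo] --> F0 x)].
Proof.
have [t0 _] := probability_inhabited m.
have [u u_dense] := mseparable_dense_seq t0 hsep.
have [M F_bounded] := hFb.
have G_equi := nearest_comp_equicontinuous hd hpiE hpi
  (nearest_dist_near0 hd hBorel hsupp hmN_on hweak hpi)
  (omega_equicontinuous F_bounded homega).
have [F0 [psi [psi_incr F0_bounded F0_unif F0_lim F0_compact]]] :=
  arzela_ascoli_subseq hd u_dense (fun N x => F_bounded N _ (hpiE N x)) G_equi.
exists F0, psi; split => // J cJ.
apply: sup_norm_cvg0 => e e0; apply: filterS (F0_compact J cJ e e0) => j F0_j x [Jx Ex].
by have := F0_j x Jx; rewrite (nearest_id hd (hpi _) _ Ex).
Qed.
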